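(* Let $P^0_0,\dots,P^0_3\in\{z=0\}$ and $P^1_0,\dots,P^1_3\in\{z=1\}$ be points in $\mathbb{R}^3$, and for $u\in[0,1]$ set $P^u_j=(1-u)P^0_j+uP^1_j$ (viewed as points of the plane $\{z=u\}\cong\mathbb{R}^2$). Assume $$J:=\min_{0\le j\le3,\;u\in[0,1]}\bigl[\overrightarrow{P^u_jP^u_{j+1}},\overrightarrow{P^u_jP^u_{j-1}}\bigr]>0$$ (indices mod $4$, $[v,w]:=\det(v,w)$ for planar vectors). For $u\in\{0,1\}$ and $s,t\in[0,1]$ let $v^u(t)=(1-t)\overrightarrow{P^u_0P^u_1}+t\overrightarrow{P^u_3P^u_2}$, $w^u(s)=(1-s)\overrightarrow{P^u_0P^u_3}+s\overrightarrow{P^u_1P^u_2}$, $Q^u(s,t)=P^u_0+s\,v^u(0)+t\,w^u(s)$. Then the map $B\colon[0,1]^3\to\mathbb{R}^3$, $B(s,t,u)=(1-u)Q^0(s,t)+uQ^1(s,t)$, is bi-Lipschitz onto its image. *)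

From Stdlib Require Import Reals Lra.
Open Scope R_scope.

Definition V3 := (R * R * R)%type.
Definition vx (p : V3) : R := fst (fst p).
Definition vy (p : V3) : R := snd (fst p).
Definition vz (p : V3) : R := snd p.

Definition vadd (p q : V3) : V3 := (vx p + vx q, vy p + vy q, vz p + vz q).
Definition vsub (p q : V3) : V3 := (vx p - vx q, vy p - vy q, vz p - vz q).
Definition vscale (a : R) (p : V3) : V3 := (a * vx p, a * vy p, a * vz p).

Definition vnorm (p : V3) : R := sqrt (vx p ^ 2 + vy p ^ 2 + vz p ^ 2).

Definition arrow (p q : V3) : V3 := vsub q p.

(* [v, w] = det(v, w) for planar vectors: computed on the (x, y)-components
   (all vectors considered lie in horizontal planes {z = u}). *)
Definition det2 (v w : V3) : R := vx v * vy w - vy v * vx w.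

Definition Pu (P0 P1 : nat -> V3) (u : R) (j : nat) : V3 :=
  vadd (vscale (1 - u) (P0 j)) (vscale u (P1 j)).

Definition vfun (P : nat -> V3) (t : R) : V3 :=
  vadd (vscale (1 - t) (arrow (P 0%nat) (P 1%nat))) (vscale t (arrow (P 3%nat) (P 2%nat))).
Definition wfun (P : nat -> V3) (s : R) : V3 :=
  vadd (vscale (1 - s) (arrow (P 0%nat) (P 3%nat))) (vscale s (arrow (P 1%nat) (P 2%nat))).
Definition Qfun (P : nat -> V3) (s t : R) : V3 :=
  vadd (vadd (P 0%nat) (vscale s (vfun P 0))) (vscale t (wfun P s)).

Definition Bmap (P0 P1 : nat -> V3) (s t u : R) : V3 :=
  vadd (vscale (1 - u) (Qfun P0 s t)) (vscale u (Qfun P1 s t)).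

Definition in01 (x : R) : Prop := 0 <= x <= 1.

(* The horizontal part of B(s,t,u) is the bilinear patch spanned by the
   quadrilateral P^u, and its vertical part is u.  Because B is bilinear in
   (s,t) and affine in u, a finite difference of B is exactly a linear map
   applied to (s-s', t-t', u-u'): its columns are the two tangent vectors of
   the patch P^u at the midpoint ((s+s')/2, (t+t')/2), followed by
   Q^1(s',t') - Q^0(s',t').  The determinant of the two tangent vectors is a
   convex combination of the four corner determinants, hence at least J, and
   all columns are bounded in terms of the vertices; a 3x3 matrix of this
   shape with bounded entries and 2x2 minor at least J is bi-Lipschitz with
   constants depending only on J and the bound. *)

From Stdlib Require Import Reals Lra Lia.
Open Scope R_scope.

Lemma vx_vadd p q : vx (vadd p q) = vx p + vx q. Proof. reflexivity. Qed.
Lemma vy_vadd p q : vy (vadd p q) = vy p + vy q. Proof. reflexivity. Qed.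
Lemma vz_vadd p q : vz (vadd p q) = vz p + vz q. Proof. reflexivity. Qed.
Lemma vx_vsub p q : vx (vsub p q) = vx p - vx q. Proof. reflexivity. Qed.
Lemma vy_vsub p q : vy (vsub p q) = vy p - vy q. Proof. reflexivity. Qed.
Lemma vz_vsub p q : vz (vsub p q) = vz p - vz q. Proof. reflexivity. Qed.
Lemma vx_vscale a p : vx (vscale a p) = a * vx p. Proof. reflexivity. Qed.
Lemma vy_vscale a p : vy (vscale a p) = a * vy p. Proof. reflexivity. Qed.
Lemma vz_vscale a p : vz (vscale a p) = a * vz p. Proof. reflexivity. Qed.
Lemma vx_triple a b c : vx (a, b, c) = a. Proof. reflexivity. Qed.
Lemma vy_triple a b c : vy (a, b, c) = b. Proof. reflexivity. Qed.
Lemma vz_triple a b c : vz (a, b, c) = c. Proof. reflexivity. Qed.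

#[local] Hint Rewrite vx_vadd vy_vadd vz_vadd vx_vsub vy_vsub vz_vsub
  vx_vscale vy_vscale vz_vscale vx_triple vy_triple vz_triple : vcoord.

Lemma V3_ext (p q : V3) : vx p = vx q -> vy p = vy q -> vz p = vz q -> p = q.
Proof. destruct p as [[x y] z], q as [[x' y'] z']; cbn; intros -> -> ->; reflexivity. Qed.

Definition vnorm2 (p : V3) : R := vx p ^ 2 + vy p ^ 2 + vz p ^ 2.
Definition hnorm2 (p : V3) : R := vx p ^ 2 + vy p ^ 2.

Definition lincomb3 (c1 c2 c3 x : V3) : V3 :=
  vadd (vadd (vscale (vx x) c1) (vscale (vy x) c2)) (vscale (vz x) c3).

Lemma vnorm_le_scaled (K : R) (p q : V3) :
  0 <= K -> vnorm2 p <= K * vnorm2 q -> vnorm p <= sqrt K * vnorm q.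
Proof.
  intros HK Hpq; unfold vnorm.
  rewrite <- sqrt_mult_alt by exact HK.
  exact (sqrt_le_1_alt _ _ Hpq).
Qed.

Lemma det2_sq_le (a1 a2 b1 b2 : R) :
  (a1 * b2 - a2 * b1) ^ 2 <= (a1 ^ 2 + a2 ^ 2) * (b1 ^ 2 + b2 ^ 2).
Proof.
  assert (Lagrange : (a1 * b2 - a2 * b1) ^ 2 + (a1 * b1 + a2 * b2) ^ 2
                     = (a1 ^ 2 + a2 ^ 2) * (b1 ^ 2 + b2 ^ 2)) by ring.
  pose proof (pow2_ge_0 (a1 * b1 + a2 * b2)); lra.
Qed.

Lemma cauchy_schwarz3 (x1 x2 x3 y1 y2 y3 : R) :
  (x1 * y1 + x2 * y2 + x3 * y3) ^ 2
  <= (x1 ^ 2 + x2 ^ 2 + x3 ^ 2) * (y1 ^ 2 + y2 ^ 2 + y3 ^ 2).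
Proof.
  assert (Lagrange :
    (x1 ^ 2 + x2 ^ 2 + x3 ^ 2) * (y1 ^ 2 + y2 ^ 2 + y3 ^ 2)
    - (x1 * y1 + x2 * y2 + x3 * y3) ^ 2
    = (x1 * y2 - x2 * y1) ^ 2 + (x1 * y3 - x3 * y1) ^ 2 + (x2 * y3 - x3 * y2) ^ 2)
    by ring.
  pose proof (pow2_ge_0 (x1 * y2 - x2 * y1)).
  pose proof (pow2_ge_0 (x1 * y3 - x3 * y1)).
  pose proof (pow2_ge_0 (x2 * y3 - x3 * y2)).
  lra.
Qed.

(* Cramer's rule: a * det = [E, w] and b * det = [v, E] for E = a v + b w. *)
Lemma det2_inverse_bound (J M v1 v2 w1 w2 a b : R) :
  0 < J -> J <= v1 * w2 - v2 * w1 ->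
  v1 ^ 2 + v2 ^ 2 <= M -> w1 ^ 2 + w2 ^ 2 <= M ->
  J ^ 2 * (a ^ 2 + b ^ 2)
  <= 2 * M * ((a * v1 + b * w1) ^ 2 + (a * v2 + b * w2) ^ 2).
Proof.
  intros HJ Hdet Hv Hw.
  set (E1 := a * v1 + b * w1); set (E2 := a * v2 + b * w2).
  set (det := v1 * w2 - v2 * w1).
  assert (HE : 0 <= E1 ^ 2 + E2 ^ 2) by nra.
  assert (HJdet : J ^ 2 <= det ^ 2).
  { assert (0 <= (det - J) * (det + J)) by (apply Rmult_le_pos; unfold det; lra).
    nra. }
  assert (Ha : (a * det) ^ 2 <= (E1 ^ 2 + E2 ^ 2) * M).
  { replace (a * det) with (E1 * w2 - E2 * w1) by (unfold E1, E2, det; ring).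
    pose proof (det2_sq_le E1 E2 w1 w2).
    pose proof (Rmult_le_compat_l _ _ _ HE Hw); lra. }
  assert (Hb : (b * det) ^ 2 <= (E1 ^ 2 + E2 ^ 2) * M).
  { replace (b * det) with (v1 * E2 - v2 * E1) by (unfold E1, E2, det; ring).
    pose proof (det2_sq_le v1 v2 E1 E2).
    pose proof (Rmult_le_compat_l _ _ _ HE Hv); lra. }
  assert (Hab : 0 <= a ^ 2 + b ^ 2) by nra.
  pose proof (Rmult_le_compat_r _ _ _ Hab HJdet); nra.
Qed.

Definition shear_bilip_const (J M : R) : R := 4 * M * (1 + M) / J ^ 2 + 3 * M + 1.

Lemma shear_bilip_const_ge (J M : R) :
  0 < J -> 0 <= M ->
  3 * M + 1 <= shear_bilip_const J M
  /\ 4 * M * (1 + M) + J ^ 2 <= J ^ 2 * shear_bilip_const J M.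
Proof.
  intros HJ HM; unfold shear_bilip_const; split.
  - assert (0 <= 4 * M * (1 + M) / J ^ 2); [| lra].
    apply Rmult_le_pos; [nra | apply Rlt_le, Rinv_0_lt_compat; nra].
  - replace (J ^ 2 * _) with (4 * M * (1 + M) + J ^ 2 * (3 * M + 1)) by (field; lra).
    nra.
Qed.

Section ShearMatrix.

Variables (c1 c2 c3 : V3) (M : R).
Hypotheses (Hz1 : vz c1 = 0) (Hz2 : vz c2 = 0) (Hz3 : vz c3 = 1).
Hypotheses (Hc1 : hnorm2 c1 <= M) (Hc2 : hnorm2 c2 <= M) (Hc3 : hnorm2 c3 <= M).

Lemma vx_lincomb3 x : vx (lincomb3 c1 c2 c3 x) = vx x * vx c1 + vy x * vx c2 + vz x * vx c3.
Proof. unfold lincomb3; autorewrite with vcoord; ring. Qed.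

Lemma vy_lincomb3 x : vy (lincomb3 c1 c2 c3 x) = vx x * vy c1 + vy x * vy c2 + vz x * vy c3.
Proof. unfold lincomb3; autorewrite with vcoord; ring. Qed.

Lemma vz_lincomb3 x : vz (lincomb3 c1 c2 c3 x) = vz x.
Proof. unfold lincomb3; autorewrite with vcoord; rewrite Hz1, Hz2, Hz3; ring. Qed.

Lemma lincomb3_norm2_le x :
  vnorm2 (lincomb3 c1 c2 c3 x) <= (3 * M + 1) * vnorm2 x.
Proof.
  unfold vnorm2, hnorm2 in *; rewrite vx_lincomb3, vy_lincomb3, vz_lincomb3.
  pose proof (cauchy_schwarz3 (vx x) (vy x) (vz x) (vx c1) (vx c2) (vx c3)).
  pose proof (cauchy_schwarz3 (vx x) (vy x) (vz x) (vy c1) (vy c2) (vy c3)).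
  assert (Hx : 0 <= vx x ^ 2 + vy x ^ 2 + vz x ^ 2) by nra.
  assert (Hcols : vx c1 ^ 2 + vx c2 ^ 2 + vx c3 ^ 2 + (vy c1 ^ 2 + vy c2 ^ 2 + vy c3 ^ 2)
                  <= 3 * M) by lra.
  pose proof (Rmult_le_compat_l _ _ _ Hx Hcols); nra.
Qed.

Lemma lincomb3_norm2_ge (J : R) x :
  0 < J -> J <= det2 c1 c2 ->
  J ^ 2 * vnorm2 x <= (4 * M * (1 + M) + J ^ 2) * vnorm2 (lincomb3 c1 c2 c3 x).
Proof.
  intros HJ Hdet.
  assert (HM : 0 <= M) by (unfold hnorm2 in Hc1; nra).
  unfold vnorm2, hnorm2, det2 in *; rewrite vx_lincomb3, vy_lincomb3, vz_lincomb3.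
  set (a := vx x); set (b := vy x); set (du := vz x).
  set (D1 := a * vx c1 + b * vx c2 + du * vx c3).
  set (D2 := a * vy c1 + b * vy c2 + du * vy c3).
  assert (Hhoriz : J ^ 2 * (a ^ 2 + b ^ 2)
                   <= 2 * M * ((D1 - du * vx c3) ^ 2 + (D2 - du * vy c3) ^ 2)).
  { replace (D1 - du * vx c3) with (a * vx c1 + b * vx c2) by (unfold D1; ring).
    replace (D2 - du * vy c3) with (a * vy c1 + b * vy c2) by (unfold D2; ring).
    exact (det2_inverse_bound J M _ _ _ _ a b HJ Hdet Hc1 Hc2). }
  assert (Hshift : (D1 - du * vx c3) ^ 2 + (D2 - du * vy c3) ^ 2
                   <= 2 * (D1 ^ 2 + D2 ^ 2) + 2 * M * du ^ 2).
  { pose proof (pow2_ge_0 (D1 + du * vx c3)); pose proof (pow2_ge_0 (D2 + du * vy c3)).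
    assert (Hdu : 0 <= du ^ 2) by nra.
    pose proof (Rmult_le_compat_l _ _ _ Hdu Hc3); nra. }
  assert (HD : 0 <= D1 ^ 2 + D2 ^ 2) by nra.
  assert (0 <= M * (D1 ^ 2 + D2 ^ 2)) by nra.
  assert (0 <= M * du ^ 2) by nra.
  nra.
Qed.

Lemma lincomb3_bilipschitz (J : R) x :
  0 < J -> J <= det2 c1 c2 ->
  let K := shear_bilip_const J M in
  vnorm x <= sqrt K * vnorm (lincomb3 c1 c2 c3 x)
  /\ vnorm (lincomb3 c1 c2 c3 x) <= sqrt K * vnorm x.
Proof.
  intros HJ Hdet K.
  assert (HM : 0 <= M) by (unfold hnorm2 in Hc1; nra).
  destruct (shear_bilip_const_ge J M HJ HM) as [HKup HKlow]; fold K in HKup, HKlow.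
  assert (HK : 0 <= K) by lra.
  assert (Hx : 0 <= vnorm2 x) by (unfold vnorm2; nra).
  assert (HAx : 0 <= vnorm2 (lincomb3 c1 c2 c3 x)) by (unfold vnorm2; nra).
  split; apply vnorm_le_scaled; try exact HK.
  - apply Rmult_le_reg_l with (J ^ 2); [nra |].
    pose proof (lincomb3_norm2_ge J x HJ Hdet).
    pose proof (Rmult_le_compat_r _ _ _ HAx HKlow); nra.
  - pose proof (lincomb3_norm2_le x).
    pose proof (Rmult_le_compat_r _ _ _ Hx HKup); lra.
Qed.

End ShearMatrix.

(* Exact, since s t - s' t' = (s - s') (t + t') / 2 + (t - t') (s + s') / 2. *)
Lemma Bmap_sub (P0 P1 : nat -> V3) (s t u s' t' u' : R) :
  vsub (Bmap P0 P1 s t u) (Bmap P0 P1 s' t' u')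
  = lincomb3 (vfun (Pu P0 P1 u) ((t + t') / 2)) (wfun (Pu P0 P1 u) ((s + s') / 2))
             (arrow (Qfun P0 s' t') (Qfun P1 s' t')) (vsub (s, t, u) (s', t', u')).
Proof.
  unfold Bmap, Qfun, vfun, wfun, Pu, lincomb3, arrow.
  apply V3_ext; autorewrite with vcoord; field.
Qed.

Lemma det2_vfun_wfun (Q : nat -> V3) (s t : R) :
  let c j := det2 (arrow (Q j) (Q ((j + 1) mod 4)%nat)) (arrow (Q j) (Q ((j + 3) mod 4)%nat)) in
  det2 (vfun Q t) (wfun Q s)
  = (1 - s) * (1 - t) * c 0%nat + s * (1 - t) * c 1%nat
    + s * t * c 2%nat + (1 - s) * t * c 3%nat.
Proof.
  simpl; unfold det2, vfun, wfun, arrow; autorewrite with vcoord; ring.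
Qed.

Lemma det2_vfun_wfun_ge (Q : nat -> V3) (J s t : R) :
  in01 s -> in01 t ->
  (forall j : nat, (j < 4)%nat ->
     J <= det2 (arrow (Q j) (Q ((j + 1) mod 4)%nat)) (arrow (Q j) (Q ((j + 3) mod 4)%nat))) ->
  J <= det2 (vfun Q t) (wfun Q s).
Proof.
  intros [Hs0 Hs1] [Ht0 Ht1] Hc.
  rewrite det2_vfun_wfun; cbv zeta.
  pose proof (Hc 0%nat ltac:(lia)); pose proof (Hc 1%nat ltac:(lia)).
  pose proof (Hc 2%nat ltac:(lia)); pose proof (Hc 3%nat ltac:(lia)).
  assert (Hw0 : 0 <= (1 - s) * (1 - t)) by nra.
  assert (Hw1 : 0 <= s * (1 - t)) by nra.
  assert (Hw2 : 0 <= s * t) by nra.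
  assert (Hw3 : 0 <= (1 - s) * t) by nra.
  nra.
Qed.

Section Heights.

Variables (Q : nat -> V3) (c : R).
Hypothesis HQ : forall j : nat, (j < 4)%nat -> vz (Q j) = c.

Lemma vz_vfun t : vz (vfun Q t) = 0.
Proof. unfold vfun, arrow; autorewrite with vcoord; rewrite !HQ by lia; ring. Qed.

Lemma vz_wfun s : vz (wfun Q s) = 0.
Proof. unfold wfun, arrow; autorewrite with vcoord; rewrite !HQ by lia; ring. Qed.

Lemma vz_Qfun s t : vz (Qfun Q s t) = c.
Proof. unfold Qfun, vfun, wfun, arrow; autorewrite with vcoord; rewrite !HQ by lia; ring. Qed.

End Heights.

Lemma vz_Pu (P0 P1 : nat -> V3) (u : R) (j : nat) :
  vz (P0 j) = 0 /\ vz (P1 j) = 1 -> vz (Pu P0 P1 u j) = u.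
Proof. intros [Hz0 Hz1]; unfold Pu; autorewrite with vcoord; rewrite Hz0, Hz1; ring. Qed.

Definition hbound (C : R) (p : V3) : Prop := Rabs (vx p) <= C /\ Rabs (vy p) <= C.

Lemma hnorm2_le_of_hbound (C : R) (p : V3) : hbound C p -> hnorm2 p <= 2 * C ^ 2.
Proof.
  intros [Hx Hy]; unfold hnorm2.
  pose proof (pow_maj_Rabs _ _ 2 Hx); pose proof (pow_maj_Rabs _ _ 2 Hy); lra.
Qed.

Lemma Rabs_lerp_le (C u a b : R) :
  in01 u -> Rabs a <= C -> Rabs b <= C -> Rabs ((1 - u) * a + u * b) <= C.
Proof.
  intros [Hu0 Hu1] Ha Hb.
  eapply Rle_trans; [apply Rabs_triang |].
  rewrite !Rabs_mult, (Rabs_pos_eq u), (Rabs_pos_eq (1 - u)) by lra.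
  nra.
Qed.

Lemma hbound_lerp (C u : R) (p q : V3) :
  in01 u -> hbound C p -> hbound C q -> hbound C (vadd (vscale (1 - u) p) (vscale u q)).
Proof.
  intros Hu [Hpx Hpy] [Hqx Hqy]; unfold hbound; autorewrite with vcoord.
  split; apply Rabs_lerp_le; assumption.
Qed.

Lemma hbound_arrow (C : R) (p q : V3) : hbound C p -> hbound C q -> hbound (2 * C) (arrow p q).
Proof.
  intros [Hpx Hpy] [Hqx Hqy]; unfold hbound, arrow; autorewrite with vcoord.
  unfold Rminus; split; eapply Rle_trans; try apply Rabs_triang; rewrite Rabs_Ropp; lra.
Qed.

Lemma Qfun_bilerp (Q : nat -> V3) (s t : R) :
  Qfun Q s t
  = vadd (vscale (1 - t) (vadd (vscale (1 - s) (Q 0%nat)) (vscale s (Q 1%nat))))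
         (vscale t (vadd (vscale (1 - s) (Q 3%nat)) (vscale s (Q 2%nat)))).
Proof.
  unfold Qfun, vfun, wfun, arrow; apply V3_ext; autorewrite with vcoord; ring.
Qed.

Section BoundedQuadrilateral.

Variables (Q : nat -> V3) (C : R).
Hypothesis HQ : forall j : nat, (j < 4)%nat -> hbound C (Q j).

Lemma hbound_vfun t : in01 t -> hbound (2 * C) (vfun Q t).
Proof. intros Ht; unfold vfun; apply hbound_lerp; [exact Ht | apply hbound_arrow; apply HQ; lia ..]. Qed.

Lemma hbound_wfun s : in01 s -> hbound (2 * C) (wfun Q s).
Proof. intros Hs; unfold wfun; apply hbound_lerp; [exact Hs | apply hbound_arrow; apply HQ; lia ..]. Qed.

Lemma hbound_Qfun s t : in01 s -> in01 t -> hbound C (Qfun Q s t).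
Proof.
  intros Hs Ht; rewrite Qfun_bilerp.
  repeat apply hbound_lerp; solve [assumption | apply HQ; lia].
Qed.

End BoundedQuadrilateral.

Lemma finite_family_bounded (f : nat -> R) (n : nat) :
  exists C, 0 <= C /\ forall j : nat, (j < n)%nat -> f j <= C.
Proof.
  induction n as [| n [C [HC HfC]]].
  - exists 0; split; [lra | intros j Hj; lia].
  - exists (Rmax C (f n)); split.
    + exact (Rle_trans _ _ _ HC (Rmax_l _ _)).
    + intros j Hj; destruct (Nat.eq_dec j n) as [-> | Hjn]; [apply Rmax_r |].
      exact (Rle_trans _ _ _ (HfC j ltac:(lia)) (Rmax_l _ _)).
Qed.

Lemma vertices_hbounded (P0 P1 : nat -> V3) :
  exists C, 0 <= C /\ forall j : nat, (j < 4)%nat -> hbound C (P0 j) /\ hbound C (P1 j).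
Proof.
  destruct (finite_family_bounded
              (fun j => Rabs (vx (P0 j)) + Rabs (vy (P0 j)) + Rabs (vx (P1 j)) + Rabs (vy (P1 j)))
              4) as [C [HC HPC]].
  exists C; split; [exact HC |].
  intros j Hj; specialize (HPC j Hj); cbv beta in HPC.
  pose proof (Rabs_pos (vx (P0 j))); pose proof (Rabs_pos (vy (P0 j))).
  pose proof (Rabs_pos (vx (P1 j))); pose proof (Rabs_pos (vy (P1 j))).
  unfold hbound; lra.
Qed.

Theorem lemma4p2 (P0 P1 : nat -> V3) :
  (forall j : nat, (j < 4)%nat -> vz (P0 j) = 0 /\ vz (P1 j) = 1) ->
  (exists J : R, 0 < J /\
     forall (j : nat) (u : R), (j < 4)%nat -> in01 u ->
       J <= det2 (arrow (Pu P0 P1 u j) (Pu P0 P1 u ((j + 1) mod 4)))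
                 (arrow (Pu P0 P1 u j) (Pu P0 P1 u ((j + 3) mod 4)))) ->
  exists L : R, 0 < L /\
    forall s t u s' t' u' : R,
      in01 s -> in01 t -> in01 u -> in01 s' -> in01 t' -> in01 u' ->
      let d := vnorm (vsub (s, t, u) (s', t', u')) in
      let dB := vnorm (vsub (Bmap P0 P1 s t u) (Bmap P0 P1 s' t' u')) in
      d <= L * dB /\ dB <= L * d.
Proof.
  intros Hz [J [HJ Hcorner]].
  destruct (vertices_hbounded P0 P1) as [C [HC HPC]].
  set (M := 2 * (2 * C) ^ 2).
  assert (HM : 0 <= M) by (unfold M; nra).
  assert (HK : 0 < shear_bilip_const J M) by (destruct (shear_bilip_const_ge J M HJ HM); lra).
  exists (sqrt (shear_bilip_const J M)); split; [apply sqrt_lt_R0, HK |].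
  intros s t u s' t' u' Hs Ht Hu Hs' Ht' Hu'; cbv zeta.
  assert (Hsm : in01 ((s + s') / 2)) by (unfold in01 in *; lra).
  assert (Htm : in01 ((t + t') / 2)) by (unfold in01 in *; lra).
  assert (HPu : forall j, (j < 4)%nat -> hbound C (Pu P0 P1 u j)).
  { intros j Hj; apply hbound_lerp; [exact Hu | apply HPC; exact Hj ..]. }
  assert (HzPu : forall j, (j < 4)%nat -> vz (Pu P0 P1 u j) = u).
  { intros j Hj; apply vz_Pu; apply Hz, Hj. }
  assert (Hz3 : vz (arrow (Qfun P0 s' t') (Qfun P1 s' t')) = 1).
  { unfold arrow; autorewrite with vcoord.
    rewrite (vz_Qfun P0 0), (vz_Qfun P1 1); [ring | intros j Hj; apply Hz, Hj ..]. }
  assert (Hc3 : hbound (2 * C) (arrow (Qfun P0 s' t') (Qfun P1 s' t'))).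
  { apply hbound_arrow; apply hbound_Qfun; try assumption; intros j Hj; apply HPC, Hj. }
  rewrite Bmap_sub.
  apply (lincomb3_bilipschitz _ _ _ M (vz_vfun _ u HzPu _) (vz_wfun _ u HzPu _) Hz3
           (hnorm2_le_of_hbound _ _ (hbound_vfun _ _ HPu _ Htm))
           (hnorm2_le_of_hbound _ _ (hbound_wfun _ _ HPu _ Hsm))
           (hnorm2_le_of_hbound _ _ Hc3) J); [exact HJ |].
  exact (det2_vfun_wfun_ge _ J _ _ Hsm Htm (fun j Hj => Hcorner j u Hj Hu)).
Qed.
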